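(* Let $P\in\Delta$ and $Q_P\in\Delta_P$. The following are equivalent: (1) $MI_{Q_P}(X:Y|Z)=\min_{Q\in\Delta_P}MI_Q(X:Y|Z)$; (2) $MI_{Q_P}(X:Z|Y)=\min_{Q\in\Delta_P}MI_Q(X:Z|Y)$; (3) $MI_{Q_P}(X:(Y,Z))=\min_{Q\in\Delta_P}MI_Q(X:(Y,Z))$; (4) $CoI_{Q_P}(X;Y;Z)=\max_{Q\in\Delta_P}CoI_Q(X;Y;Z)$; (5) $H_{Q_P}(X|Y,Z)=\max_{Q\in\Delta_P}H_Q(X|Y,Z)$. Moreover, $Q\mapsto MI_Q(X:Y|Z)$, $Q\mapsto MI_Q(X:Z|Y)$ and $Q\mapsto MI_Q(X:(Y,Z))$ are convex on $\Delta_P$, and $Q\mapsto CoI_Q(X;Y;Z)$ and $Q\mapsto H_Q(X|Y,Z)$ are concave on $\Delta_P$. Consequently, for fixed $P$, the set of all $Q_P\in\Delta_P$ satisfying these conditions is convex.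
   Context: $X,Y,Z$ are random variables with finite state spaces $\mathcal X,\mathcal Y,\mathcal Z$. $\Delta$ denotes the set of all probability distributions on $\mathcal X\times\mathcal Y\times\mathcal Z$; a subscript $Q$ on an information quantity means it is computed w.r.t. $Q\in\Delta$. For $P\in\Delta$, $\Delta_P=\{Q\in\Delta: Q(X=x,Y=y)=P(X=x,Y=y)\text{ and }Q(X=x,Z=z)=P(X=x,Z=z)\ \forall x,y,z\}$. Co-information: $CoI_Q(X;Y;Z)=MI_Q(X:Y)-MI_Q(X:Y|Z)$. *)

From mathcomp Require Import all_boot.
From Stdlib Require Import Reals.
Set Implicit Arguments.
Unset Strict Implicit.
Unset Printing Implicit Defensive.
Local Open Scope R_scope.

Definition rsum (T : finType) (f : T -> R) : R := \big[Rplus/0]_(t : T) f t.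

Definition jdist (X Y Z : finType) := X -> Y -> Z -> R.

Definition is_dist (X Y Z : finType) (Q : jdist X Y Z) : Prop :=
  (forall x y z, 0 <= Q x y z) /\
  rsum (fun x : X => rsum (fun y : Y => rsum (fun z : Z => Q x y z))) = 1.

Definition DeltaP (X Y Z : finType) (P Q : jdist X Y Z) : Prop :=
  is_dist Q /\
  (forall x y, rsum (fun z => Q x y z) = rsum (fun z => P x y z)) /\
  (forall x z, rsum (fun y => Q x y z) = rsum (fun y => P x y z)).

Definition xlnx (p : R) : R := if Req_dec_T p 0 then 0 else p * ln p.

Definition ent (T : finType) (p : T -> R) : R := - rsum (fun t => xlnx (p t)).

Section Info.
Variables (X Y Z : finType) (Q : jdist X Y Z).

Definition H_XYZ := ent (fun t : X * Y * Z => Q t.1.1 t.1.2 t.2).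
Definition H_XY := ent (fun t : X * Y => rsum (fun z => Q t.1 t.2 z)).
Definition H_XZ := ent (fun t : X * Z => rsum (fun y => Q t.1 y t.2)).
Definition H_YZ := ent (fun t : Y * Z => rsum (fun x => Q x t.1 t.2)).
Definition H_X := ent (fun x : X => rsum (fun y => rsum (fun z => Q x y z))).
Definition H_Y := ent (fun y : Y => rsum (fun x => rsum (fun z => Q x y z))).
Definition H_Z := ent (fun z : Z => rsum (fun x => rsum (fun y => Q x y z))).

Definition condH_X_YZ := H_XYZ - H_YZ.
Definition MI_X_Y := H_X + H_Y - H_XY.
Definition MI_X_Y_Z := H_XZ + H_YZ - H_XYZ - H_Z.
Definition MI_X_Z_Y := H_XY + H_YZ - H_XYZ - H_Y.
Definition MI_X_YZ := H_X + H_YZ - H_XYZ.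
Definition CoI := MI_X_Y - MI_X_Y_Z.
End Info.

Definition is_min_on (D : Type) (S : D -> Prop) (f : D -> R) (q : D) : Prop :=
  S q /\ forall q', S q' -> f q <= f q'.
Definition is_max_on (D : Type) (S : D -> Prop) (f : D -> R) (q : D) : Prop :=
  S q /\ forall q', S q' -> f q' <= f q.

Definition mix (X Y Z : finType) (t : R) (Q1 Q2 : jdist X Y Z) : jdist X Y Z :=
  fun x y z => t * Q1 x y z + (1 - t) * Q2 x y z.

Definition convex_on (X Y Z : finType) (S : jdist X Y Z -> Prop)
  (f : jdist X Y Z -> R) : Prop :=
  forall Q1 Q2 t, S Q1 -> S Q2 -> 0 <= t <= 1 ->
    f (mix t Q1 Q2) <= t * f Q1 + (1 - t) * f Q2.
Definition concave_on (X Y Z : finType) (S : jdist X Y Z -> Prop)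
  (f : jdist X Y Z -> R) : Prop :=
  forall Q1 Q2 t, S Q1 -> S Q2 -> 0 <= t <= 1 ->
    t * f Q1 + (1 - t) * f Q2 <= f (mix t Q1 Q2).
Definition convex_set (X Y Z : finType) (S : jdist X Y Z -> Prop) : Prop :=
  forall Q1 Q2 t, S Q1 -> S Q2 -> 0 <= t <= 1 -> S (mix t Q1 Q2).

(* Every information quantity of the theorem is, on Delta_P, an affine
   function of the single quantity H(X|Y,Z).

   Indeed, Q in Delta_P fixes the (X,Y) and (X,Z) marginals of Q, hence also
   the X, Y and Z marginals and the entropies H_XY, H_XZ, H_X, H_Y, H_Z.
   Writing each quantity in terms of entropies gives, for Q in Delta_P,
     MI(X:Y|Z) = c1 - H(X|Y,Z),   MI(X:Z|Y) = c2 - H(X|Y,Z),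
     MI(X:(Y,Z)) = c3 - H(X|Y,Z), CoI(X;Y;Z) = c4 + H(X|Y,Z),
   with constants c_i depending on P only.  So all five optimisation problems
   have the same optimisers, and all convexity statements reduce to the
   concavity of Q |-> H(X|Y,Z) on the convex set Delta_P.

   That concavity follows from H(X|Y,Z) = - sum_{y,z,x} d(Q(x,y,z), Q(y,z)),
   where d(a,b) = a ln a - a ln b is the summand of the relative entropy:
   d is positively homogeneous and subadditive (the two-term log-sum
   inequality), hence jointly convex, and Q |-> (Q(x,y,z), Q(y,z)) is linear.
   Finally the set of minimisers of a convex function on a convex set is
   convex. *)

From HB Require Import structures.
From mathcomp Require Import all_boot.
From Stdlib Require Import Reals Lra Psatz.
Local Open Scope R_scope.

Lemma RplusA : associative Rplus. Proof. by move=> a b c; rewrite Rplus_assoc. Qed.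
HB.instance Definition _ := Monoid.isComLaw.Build R 0 Rplus RplusA Rplus_comm Rplus_0_l.

Lemma rsum_ext (T : finType) (f g : T -> R) :
  (forall t, f t = g t) -> rsum f = rsum g.
Proof. by move=> efg; rewrite /rsum; apply: eq_bigr => t _. Qed.

Lemma rsum_scale (T : finType) (c : R) (f : T -> R) :
  rsum (fun t => c * f t) = c * rsum f.
Proof. by rewrite /rsum; elim/big_rec2: _ => [|t u v _ ->]; ring. Qed.

Lemma rsum_mix (T : finType) (a b : R) (f g : T -> R) :
  rsum (fun t => a * f t + b * g t) = a * rsum f + b * rsum g.
Proof. by rewrite /rsum big_split -!/(rsum _) !rsum_scale. Qed.

Lemma rsum_sub (T : finType) (f g : T -> R) :
  rsum (fun t => f t - g t) = rsum f - rsum g.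
Proof.
rewrite (@rsum_ext _ _ (fun t => 1 * f t + (-1) * g t)) ?rsum_mix; first ring.
by move=> t; ring.
Qed.

Lemma rsum_le (T : finType) (f g : T -> R) :
  (forall t, f t <= g t) -> rsum f <= rsum g.
Proof.
move=> lefg; rewrite /rsum; elim/big_rec2: _ => [|t u v _ leuv]; first lra.
by have := lefg t; lra.
Qed.

Lemma rsum_le_mix (T : finType) (a b : R) (f g h : T -> R) :
  (forall t, f t <= a * g t + b * h t) -> rsum f <= a * rsum g + b * rsum h.
Proof. by move=> le_f; rewrite -rsum_mix; apply: rsum_le. Qed.

Lemma rsum_ge_term (T : finType) (f : T -> R) (t0 : T) :
  (forall t, 0 <= f t) -> f t0 <= rsum f.
Proof.
move=> f_ge0; rewrite /rsum (bigD1 t0) //=.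
suff : 0 <= \big[Rplus/0]_(t | t != t0) f t by lra.
by elim/big_rec: _ => [|t u _ u_ge0]; [lra | have := f_ge0 t; lra].
Qed.

Lemma rsum_pair (A B : finType) (f : A * B -> R) :
  rsum f = rsum (fun a => rsum (fun b => f (a, b))).
Proof. by rewrite /rsum pair_bigA; apply: eq_bigr => -[a b] _. Qed.

Lemma rsum_swap (A B : finType) (f : A -> B -> R) :
  rsum (fun a => rsum (fun b => f a b)) = rsum (fun b => rsum (fun a => f a b)).
Proof. by rewrite /rsum exchange_big. Qed.

Lemma xlnxE (p : R) : xlnx p = p * ln p.
Proof. by rewrite /xlnx; case: Req_dec_T => [p0|_] /=; [rewrite p0|]; ring. Qed.

(* The relative-entropy summand a ln (a / b), written so that it is 0 for a = 0.
   It is only meaningful under the support condition 0 < a -> 0 < b. *)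
Definition divterm (a b : R) : R := a * ln a - a * ln b.

(* Gibbs-type lower bound a - b <= a ln (a / b), from ln r <= r - 1. *)
Lemma divterm_ge (a b : R) :
  0 <= a -> 0 <= b -> (0 < a -> 0 < b) -> a - b <= divterm a b.
Proof.
move=> a_ge0 b_ge0 supp; rewrite /divterm.
have [->|a_neq0] := Req_dec a 0; first by rewrite !Rmult_0_l; lra.
have a_gt0 : 0 < a by lra.
have b_gt0 := supp a_gt0.
have r_gt0 : 0 < b / a by apply: Rdiv_lt_0_compat.
have ln_r : ln (b / a) <= b / a - 1.
  by have := exp_ineq1_le (ln (b / a)); rewrite exp_ln //; lra.
have -> : b = a * (b / a) by field; lra.
rewrite ln_mult //.
have : a * ln (b / a) <= a * (b / a - 1) by apply: Rmult_le_compat_l; lra.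
lra.
Qed.

Lemma divterm_scale_r (a b k : R) :
  0 <= a -> (0 < a -> 0 < b) -> 0 < k ->
  divterm a b = divterm a (b * k) + a * ln k.
Proof.
move=> a_ge0 supp k_gt0; rewrite /divterm.
have [->|a_neq0] := Req_dec a 0; first ring.
by rewrite ln_mult; [ring | apply: supp; lra | done].
Qed.

Lemma divterm_hom (t a b : R) :
  0 <= t -> 0 <= a -> (0 < a -> 0 < b) ->
  divterm (t * a) (t * b) = t * divterm a b.
Proof.
move=> t_ge0 a_ge0 supp; rewrite /divterm.
have [->|t_neq0] := Req_dec t 0; first ring.
have [->|a_neq0] := Req_dec a 0; first ring.
by rewrite !ln_mult; [ring | lra | apply: supp; lra | lra | lra].
Qed.

(* Two-term log-sum inequality: divterm is subadditive.  Scaling both second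
   arguments by k = (a1 + a2) / (b1 + b2) equalises the sums, and the Gibbs
   bound for the rescaled terms adds up to 0. *)
Lemma divterm_subadd (a1 a2 b1 b2 : R) :
  0 <= a1 -> 0 <= a2 -> 0 <= b1 -> 0 <= b2 ->
  (0 < a1 -> 0 < b1) -> (0 < a2 -> 0 < b2) ->
  divterm (a1 + a2) (b1 + b2) <= divterm a1 b1 + divterm a2 b2.
Proof.
move=> a1_ge0 a2_ge0 b1_ge0 b2_ge0 supp1 supp2.
have [a_eq0|a_neq0] := Req_dec (a1 + a2) 0.
  have -> : a1 = 0 by lra. have -> : a2 = 0 by lra.
  by rewrite /divterm; lra.
have b_gt0 : 0 < b1 + b2.
  have [a1_eq0|a1_neq0] := Req_dec a1 0.
    by have := supp2; lra.
  by have := supp1; lra.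
set k := (a1 + a2) / (b1 + b2).
have k_gt0 : 0 < k by apply: Rdiv_lt_0_compat; lra.
have a_eq : a1 + a2 = (b1 + b2) * k by rewrite /k; field; lra.
have sum_eq : divterm (a1 + a2) (b1 + b2) = (a1 + a2) * ln k.
  rewrite /divterm; have -> : ln (a1 + a2) = ln (b1 + b2) + ln k.
    by rewrite a_eq ln_mult.
  ring.
have gibbs1 : a1 - b1 * k <= divterm a1 (b1 * k).
  by apply: divterm_ge => //; [nra | move=> /supp1; nra].
have gibbs2 : a2 - b2 * k <= divterm a2 (b2 * k).
  by apply: divterm_ge => //; [nra | move=> /supp2; nra].
rewrite sum_eq (@divterm_scale_r a1 b1 k) // (@divterm_scale_r a2 b2 k) //.
lra.
Qed.

(* Joint convexity of divterm, from homogeneity and subadditivity. *)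
Lemma divterm_convex (t a1 a2 b1 b2 : R) :
  0 <= t <= 1 -> 0 <= a1 -> 0 <= a2 -> a1 <= b1 -> a2 <= b2 ->
  divterm (t * a1 + (1 - t) * a2) (t * b1 + (1 - t) * b2)
    <= t * divterm a1 b1 + (1 - t) * divterm a2 b2.
Proof.
move=> t01 a1_ge0 a2_ge0 le1 le2.
rewrite -divterm_hom; try lra.
rewrite -(@divterm_hom (1 - t)); try lra.
by apply: divterm_subadd; try nra; move=> ?; nra.
Qed.

Section CondEntropy.
Set Implicit Arguments.
Unset Strict Implicit.
Variables X Y Z : finType.

Definition marg_YZ (Q : jdist X Y Z) (y : Y) (z : Z) : R := rsum (fun x => Q x y z).

Lemma condH_divterm (Q : jdist X Y Z) : condH_X_YZ Q =
  - rsum (fun y => rsum (fun z => rsum (fun x => divterm (Q x y z) (marg_YZ Q y z)))).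
Proof.
have joint : rsum (fun t : X * Y * Z => xlnx (Q t.1.1 t.1.2 t.2)) =
    rsum (fun y => rsum (fun z => rsum (fun x => Q x y z * ln (Q x y z)))).
  rewrite rsum_pair rsum_pair /= rsum_swap.
  apply: rsum_ext => y; rewrite rsum_swap.
  by apply: rsum_ext => z; apply: rsum_ext => x; rewrite xlnxE.
have marginal : rsum (fun t : Y * Z => xlnx (marg_YZ Q t.1 t.2)) =
    rsum (fun y => rsum (fun z => rsum (fun x => Q x y z * ln (marg_YZ Q y z)))).
  rewrite rsum_pair /=; apply: rsum_ext => y; apply: rsum_ext => z.
  by rewrite xlnxE Rmult_comm -rsum_scale; apply: rsum_ext => x; ring.
have split_sum :
    rsum (fun y => rsum (fun z => rsum (fun x => divterm (Q x y z) (marg_YZ Q y z)))) =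
    rsum (fun y => rsum (fun z => rsum (fun x => Q x y z * ln (Q x y z)))) -
    rsum (fun y => rsum (fun z => rsum (fun x => Q x y z * ln (marg_YZ Q y z)))).
  rewrite -rsum_sub; apply: rsum_ext => y; rewrite -rsum_sub.
  by apply: rsum_ext => z; rewrite -rsum_sub.
rewrite /condH_X_YZ /H_XYZ /H_YZ /ent joint -/(marg_YZ Q) marginal split_sum.
ring.
Qed.

(* H(X|Y,Z) is concave on nonnegative functions: each summand of
   condH_divterm is a jointly convex function of a linear image of Q. *)
Lemma condH_concave (Q1 Q2 : jdist X Y Z) (t : R) :
  (forall x y z, 0 <= Q1 x y z) -> (forall x y z, 0 <= Q2 x y z) -> 0 <= t <= 1 ->
  t * condH_X_YZ Q1 + (1 - t) * condH_X_YZ Q2 <= condH_X_YZ (mix t Q1 Q2).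
Proof.
move=> Q1_ge0 Q2_ge0 t01; rewrite !condH_divterm.
suff : rsum (fun y => rsum (fun z => rsum (fun x =>
          divterm (mix t Q1 Q2 x y z) (marg_YZ (mix t Q1 Q2) y z)))) <=
       t * rsum (fun y => rsum (fun z => rsum (fun x =>
          divterm (Q1 x y z) (marg_YZ Q1 y z)))) +
       (1 - t) * rsum (fun y => rsum (fun z => rsum (fun x =>
          divterm (Q2 x y z) (marg_YZ Q2 y z)))) by lra.
apply: rsum_le_mix => y; apply: rsum_le_mix => z; apply: rsum_le_mix => x.
rewrite /mix /marg_YZ rsum_mix.
by apply: divterm_convex => //; apply: rsum_ge_term.
Qed.

Lemma DeltaP_convex (P : jdist X Y Z) : convex_set (DeltaP P).
Proof.
move=> Q1 Q2 t [[Q1_ge0 Q1_mass] [Q1_XY Q1_XZ]] [[Q2_ge0 Q2_mass] [Q2_XY Q2_XZ]] t01.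
rewrite /mix; split; [split|split].
- by move=> x y z; have := Q1_ge0 x y z; have := Q2_ge0 x y z; nra.
- rewrite (@rsum_ext _ _ (fun x =>
      t * rsum (fun y => rsum (fun z => Q1 x y z)) +
      (1 - t) * rsum (fun y => rsum (fun z => Q2 x y z)))).
    by rewrite rsum_mix Q1_mass Q2_mass; ring.
  by move=> x; rewrite -rsum_mix; apply: rsum_ext => y; rewrite -rsum_mix.
- by move=> x y; rewrite rsum_mix Q1_XY Q2_XY; ring.
- by move=> x z; rewrite rsum_mix Q1_XZ Q2_XZ; ring.
Qed.

Section FixedMarginals.
Variables P Q : jdist X Y Z.
Hypothesis Q_in : DeltaP P Q.

Lemma DeltaP_H_XY : H_XY Q = H_XY P.
Proof.
case: Q_in => _ [QXY _]; rewrite /H_XY /ent; congr (- _).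
by apply: rsum_ext => t; rewrite QXY.
Qed.

Lemma DeltaP_H_XZ : H_XZ Q = H_XZ P.
Proof.
case: Q_in => _ [_ QXZ]; rewrite /H_XZ /ent; congr (- _).
by apply: rsum_ext => t; rewrite QXZ.
Qed.

Lemma DeltaP_H_X : H_X Q = H_X P.
Proof.
case: Q_in => _ [QXY _]; rewrite /H_X /ent; congr (- _).
by apply: rsum_ext => x; congr xlnx; apply: rsum_ext.
Qed.

Lemma DeltaP_H_Y : H_Y Q = H_Y P.
Proof.
case: Q_in => _ [QXY _]; rewrite /H_Y /ent; congr (- _).
by apply: rsum_ext => y; congr xlnx; apply: rsum_ext => x.
Qed.

Lemma DeltaP_H_Z : H_Z Q = H_Z P.
Proof.
case: Q_in => _ [_ QXZ]; rewrite /H_Z /ent; congr (- _).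
by apply: rsum_ext => z; congr xlnx; apply: rsum_ext => x.
Qed.

Lemma DeltaP_MI_X_Y_Z : MI_X_Y_Z Q = (H_XZ P - H_Z P) - condH_X_YZ Q.
Proof. by rewrite /MI_X_Y_Z /condH_X_YZ DeltaP_H_XZ DeltaP_H_Z; ring. Qed.

Lemma DeltaP_MI_X_Z_Y : MI_X_Z_Y Q = (H_XY P - H_Y P) - condH_X_YZ Q.
Proof. by rewrite /MI_X_Z_Y /condH_X_YZ DeltaP_H_XY DeltaP_H_Y; ring. Qed.

Lemma DeltaP_MI_X_YZ : MI_X_YZ Q = H_X P - condH_X_YZ Q.
Proof. by rewrite /MI_X_YZ /condH_X_YZ DeltaP_H_X; ring. Qed.

Lemma DeltaP_CoI :
  CoI Q = (H_X P + H_Y P - H_XY P - H_XZ P + H_Z P) + condH_X_YZ Q.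
Proof.
rewrite /CoI /MI_X_Y /MI_X_Y_Z /condH_X_YZ.
by rewrite DeltaP_H_X DeltaP_H_Y DeltaP_H_XY DeltaP_H_XZ DeltaP_H_Z; ring.
Qed.
End FixedMarginals.

Section Optimisers.
Variable S : jdist X Y Z -> Prop.

Lemma min_iff_max_reflect (f g : jdist X Y Z -> R) (k : R) (q : jdist X Y Z) :
  (forall Q, S Q -> f Q = k - g Q) -> (is_min_on S f q <-> is_max_on S g q).
Proof.
move=> fE; split=> -[Sq opt]; split=> // q' Sq';
  by have := opt q' Sq'; rewrite (fE q) // (fE q') //; lra.
Qed.

Lemma max_iff_max_shift (f g : jdist X Y Z -> R) (k : R) (q : jdist X Y Z) :
  (forall Q, S Q -> f Q = k + g Q) -> (is_max_on S f q <-> is_max_on S g q).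
Proof.
move=> fE; split=> -[Sq opt]; split=> // q' Sq';
  by have := opt q' Sq'; rewrite (fE q) // (fE q') //; lra.
Qed.

Hypothesis S_convex : convex_set S.

Lemma convex_reflect (f g : jdist X Y Z -> R) (k : R) :
  concave_on S g -> (forall Q, S Q -> f Q = k - g Q) -> convex_on S f.
Proof.
move=> g_concave fE Q1 Q2 t SQ1 SQ2 t01.
have := g_concave Q1 Q2 t SQ1 SQ2 t01.
by rewrite !fE //; [lra | apply: S_convex].
Qed.

Lemma concave_shift (f g : jdist X Y Z -> R) (k : R) :
  concave_on S g -> (forall Q, S Q -> f Q = k + g Q) -> concave_on S f.
Proof.
move=> g_concave fE Q1 Q2 t SQ1 SQ2 t01.
have := g_concave Q1 Q2 t SQ1 SQ2 t01.
by rewrite !fE //; [lra | apply: S_convex].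
Qed.

Lemma argmin_convex (f : jdist X Y Z -> R) :
  convex_on S f -> convex_set (is_min_on S f).
Proof.
move=> f_convex Q1 Q2 t [SQ1 min1] [SQ2 min2] t01.
split=> [|q Sq]; first exact: S_convex.
have := f_convex Q1 Q2 t SQ1 SQ2 t01.
have := min1 q Sq; have := min2 q Sq.
nra.
Qed.
End Optimisers.
End CondEntropy.

Theorem mainTheorem2 (X Y Z : finType) (P : jdist X Y Z) (hP : is_dist P) :
  (forall QP : jdist X Y Z, DeltaP P QP ->
     let c1 := is_min_on (DeltaP P) (@MI_X_Y_Z X Y Z) QP in
     let c2 := is_min_on (DeltaP P) (@MI_X_Z_Y X Y Z) QP in
     let c3 := is_min_on (DeltaP P) (@MI_X_YZ X Y Z) QP in
     let c4 := is_max_on (DeltaP P) (@CoI X Y Z) QP in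
     let c5 := is_max_on (DeltaP P) (@condH_X_YZ X Y Z) QP in
     (c1 <-> c2) /\ (c1 <-> c3) /\ (c1 <-> c4) /\ (c1 <-> c5)) /\
  convex_on (DeltaP P) (@MI_X_Y_Z X Y Z) /\
  convex_on (DeltaP P) (@MI_X_Z_Y X Y Z) /\
  convex_on (DeltaP P) (@MI_X_YZ X Y Z) /\
  concave_on (DeltaP P) (@CoI X Y Z) /\
  concave_on (DeltaP P) (@condH_X_YZ X Y Z) /\
  convex_set (is_min_on (DeltaP P) (@MI_X_Y_Z X Y Z)).
Proof.
have affine1 := DeltaP_MI_X_Y_Z (P := P); have affine2 := DeltaP_MI_X_Z_Y (P := P).
have affine3 := DeltaP_MI_X_YZ (P := P); have affine4 := DeltaP_CoI (P := P).
have convP := DeltaP_convex (P := P).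
have condH_cc : concave_on (DeltaP P) (@condH_X_YZ X Y Z).
  by move=> Q1 Q2 t [[Q1_ge0 _] _] [[Q2_ge0 _] _]; apply: condH_concave.
have MI1_cv := convex_reflect convP condH_cc affine1.
split.
  move=> QP _ /=.
  rewrite (min_iff_max_reflect _ affine1) (min_iff_max_reflect _ affine2).
  by rewrite (min_iff_max_reflect _ affine3) (max_iff_max_shift _ affine4).
split=> //; split; first exact: convex_reflect condH_cc affine2.
split; first exact: convex_reflect condH_cc affine3.
split; first exact: concave_shift condH_cc affine4.
split=> //; exact: (argmin_convex convP MI1_cv).
Qed.
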